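(* Let $(a^t)_{t\ge0}$ be a fixed sequence of numbers in $[0,1]$, and let $(R_t)_{t\ge0}$ be a sequence of non-negative integer-valued random variables such that: $R_0=0$; if $R_t\le 5$ then $R_{t+1}\le 6$ (otherwise arbitrary); and if $R_t\ge 6$, then, conditionally on the history up to time $t$, $R_{t+1}=R_t+1$ with probability $\frac35 a^t$, $R_{t+1}=R_t-4$ with probability $\frac25 a^t$, and $R_{t+1}=R_t-2$ with probability $1-a^t$. Then for all $i\ge 6$ and $t\ge0$, \[ \Pr[R_t=i]\le\Big(\frac23\Big)^{i-6}. \] *)

From HB Require Import structures.
From mathcomp Require Import all_boot all_order all_algebra.
From mathcomp Require Import all_classical all_reals all_analysis.
Set Implicit Arguments. Unset Strict Implicit. Unset Printing Implicit Defensive.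
Import Order.TTheory GRing.Theory Num.Theory.
Local Open Scope classical_set_scope.

Definition history (T : Type) (X : nat -> T -> nat) (t : nat) (h : nat -> nat)
  : set T := [set w | forall s, (s <= t)%N -> X s w = h s].

(* Induction on t, for all i >= 6 at once; for i = 6 the bound is 1.  For
   i >= 7, up to null sets R_{t+1} = i can only be reached from R_t = i - 1,
   i + 4 or i + 2, since from below 6 the process cannot jump above 6 and from
   6 or more it only moves by +1, -4 or -2.  The transition laws, given on
   every history, add up over histories to the same laws given R_t alone, so
     P[R_{t+1} = i] <= (2/3)^(i-7) (3/5 a + 2/5 a (2/3)^5 + (1 - a) (2/3)^3),
   and the bracket is at most 2/3 for every a in [0, 1]. *)

From HB Require Import structures.
From mathcomp Require Import all_boot all_order all_algebra.
From mathcomp Require Import all_classical all_reals all_analysis.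
From mathcomp Require Import ring lra zify.
Import Order.TTheory GRing.Theory Num.Theory.
Local Open Scope classical_set_scope.
Local Open Scope ring_scope.
Set Implicit Arguments.
Unset Strict Implicit.
Unset Printing Implicit Defensive.

Section history_decomposition.
Context d (T : measurableType d) (R : realType).
Variable mu : {measure set T -> \bar R}.
Variable X : nat -> T -> nat.
Hypothesis mX : forall t k, measurable [set w | X t w = k].

Definition history_from (n t : nat) (h : nat -> nat) : set T :=
  [set w | forall s, (n <= s <= t)%N -> X s w = h s].

Lemma history_from0 t h : history_from 0 t h = history X t h.
Proof. by []. Qed.

Lemma history_from_id t h : history_from t t h = [set w | X t w = h t].
Proof.
apply/seteqP; split => w /= Hw; first by apply: Hw; rewrite leqnn.
by move=> s; rewrite -eqn_leq => /eqP <-.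
Qed.

Lemma measurable_history_from n t h : measurable (history_from n t h).
Proof.
have -> : history_from n t h =
    \bigcap_(s in [set s | (n <= s <= t)%N]) [set w | X s w = h s].
  by apply/seteqP; split => w /= Hw s Hs; apply: Hw.
by apply: bigcap_measurableType => s _; apply: mX.
Qed.

Lemma history_from_bigcup n t h : (n < t)%N ->
  history_from n.+1 t h = \bigcup_v history_from n t (dfwith h n v).
Proof.
move=> nt; apply/seteqP; split => w /=.
  move=> Hw; exists (X n w) => // s /andP[ns st].
  have [->|sn] := eqVneq s n; first by rewrite dfwithin.
  by rewrite dfwithout 1?eq_sym // Hw // st andbT ltn_neqAle eq_sym sn ns.
move=> [v _ Hw] s /andP[ns st].
by rewrite -(dfwithout h v (negbT (ltn_eqF ns))) Hw // st ltnW.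
Qed.

Lemma trivIset_history_from n t h : (n <= t)%N ->
  trivIset setT (fun v => history_from n t (dfwith h n v)).
Proof.
move=> nt v v' _ _ [w [Hv Hv']]; have := Hv n; have := Hv' n.
by rewrite !dfwithin leqnn nt => /(_ isT) <- /(_ isT).
Qed.

(* The coordinates R_0, ..., R_(t-1) of the history are summed out one at a
   time, which is what history_from n interpolates. *)
Lemma measure_stateI_of_history t j (E : set T) (c : R) :
  measurable E -> 0 <= c ->
  (forall h, h t = j ->
     mu (history X t h `&` E) = (c%:E * mu (history X t h))%E) ->
  mu ([set w | X t w = j] `&` E) = (c%:E * mu [set w | X t w = j])%E.
Proof.
move=> mE c0 mu_history.
suff mu_from : forall n h, (n <= t)%N -> h t = j ->
    mu (history_from n t h `&` E) = (c%:E * mu (history_from n t h))%E.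
  by have := mu_from t (fun=> j) (leqnn t) erefl; rewrite history_from_id.
elim=> [|n IH] h nt htj; first by rewrite history_from0; apply: mu_history.
rewrite history_from_bigcup // setI_bigcupl !measure_bigcup //.
- rewrite -nneseriesZl //; apply: eq_eseriesr => v _.
  apply: IH; first exact: ltnW.
  by rewrite dfwithout // neq_ltn nt.
- by move=> v _; apply: measurable_history_from.
- exact/trivIset_history_from/ltnW.
- by move=> v _; apply: measurableI => //; apply: measurable_history_from.
- exact/trivIset_setIr/trivIset_history_from/ltnW.
Qed.

End history_decomposition.

Lemma measurable_preimage_nat d (T : measurableType d) (f : T -> nat) :
  (forall k, measurable (f @^-1` [set k])) -> forall A, measurable (f @^-1` A).
Proof.
move=> mf A; have -> : f @^-1` A = \bigcup_(k in A) f @^-1` [set k].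
  by apply/seteqP; split => [w Aw|w [k Ak /= ->]] //; exists (f w).
exact: bigcup_measurable.
Qed.

Lemma chain_drift_le (R : realFieldType) (a : R) (n : nat) : 0 <= a <= 1 ->
  3 / 5 * a * (2 / 3) ^+ n + 2 / 5 * a * (2 / 3) ^+ (n + 5)
    + (1 - a) * (2 / 3) ^+ (n + 3) <= (2 / 3) ^+ (n + 1).
Proof.
move=> /andP[a0 a1]; rewrite !exprD !exprS expr0.
have x0 : 0 <= (2 / 3 : R) ^+ n by rewrite exprn_ge0.
nra.
Qed.

Definition chain_step (j k : nat) : Prop :=
  k = (j + 1)%N \/ k = (j - 4)%N \/ k = (j - 2)%N.

Section chain.
Context d (T : measurableType d) (R : realType) (P : probability T R).
Variables (a : nat -> R) (X : nat -> T -> nat).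
Hypothesis ha : forall t, 0 <= a t <= 1.
Hypothesis hX : forall t k, measurable [set w | X t w = k].
Hypothesis hlow : forall t,
  P [set w | (X t w <= 5)%N /\ (6 < X t.+1 w)%N] = 0%E.
Hypothesis hup : forall t (h : nat -> nat), (6 <= h t)%N ->
  P (history X t h `&` [set w | X t.+1 w = (h t + 1)%N])
    = ((3 / 5 * a t)%:E * P (history X t h))%E.
Hypothesis hdown4 : forall t (h : nat -> nat), (6 <= h t)%N ->
  P (history X t h `&` [set w | X t.+1 w = (h t - 4)%N])
    = ((2 / 5 * a t)%:E * P (history X t h))%E.
Hypothesis hdown2 : forall t (h : nat -> nat), (6 <= h t)%N ->
  P (history X t h `&` [set w | X t.+1 w = (h t - 2)%N])
    = ((1 - a t)%:E * P (history X t h))%E.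

Let a_ge0 t : 0 <= a t. Proof. by case/andP: (ha t). Qed.
Let a_le1 t : a t <= 1. Proof. by case/andP: (ha t). Qed.

Lemma measure_step_up t j : (6 <= j)%N ->
  P ([set w | X t w = j] `&` [set w | X t.+1 w = (j + 1)%N])
    = ((3 / 5 * a t)%:E * P [set w | X t w = j])%E.
Proof.
move=> j6; apply: measure_stateI_of_history => //.
  by rewrite mulr_ge0 ?a_ge0.
by move=> h htj; rewrite -htj; apply: hup; rewrite htj.
Qed.

Lemma measure_step_down4 t j : (6 <= j)%N ->
  P ([set w | X t w = j] `&` [set w | X t.+1 w = (j - 4)%N])
    = ((2 / 5 * a t)%:E * P [set w | X t w = j])%E.
Proof.
move=> j6; apply: measure_stateI_of_history => //.
  by rewrite mulr_ge0 ?a_ge0.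
by move=> h htj; rewrite -htj; apply: hdown4; rewrite htj.
Qed.

Lemma measure_step_down2 t j : (6 <= j)%N ->
  P ([set w | X t w = j] `&` [set w | X t.+1 w = (j - 2)%N])
    = ((1 - a t)%:E * P [set w | X t w = j])%E.
Proof.
move=> j6; apply: measure_stateI_of_history => //.
  by rewrite subr_ge0 a_le1.
by move=> h htj; rewrite -htj; apply: hdown2; rewrite htj.
Qed.

Lemma measure_state_off_step t j : (6 <= j)%N ->
  P [set w | X t w = j /\ ~ chain_step j (X t.+1 w)] = 0%E.
Proof.
move=> j6; pose next k := [set w | X t.+1 w = k].
set S := [set w | X t w = j].
set U := next (j + 1)%N `|` (next (j - 4)%N `|` next (j - 2)%N).
have mSk k : measurable (S `&` next k) by apply: measurableI; apply: hX.
have disj k k' : k <> k' -> (S `&` next k) `&` (S `&` next k') = set0.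
  by move=> kk'; apply/seteqP; split => // w; rewrite /next /= => -[[_ ->] [_]].
have fS : P S \is a fin_num := fin_num_measure _ _ (hX t j).
have PSU : P (S `&` U) = P S.
  rewrite !setIUr measureU; [|exact: mSk|exact: measurableU|]; last first.
    by rewrite setIUr !disj ?setU0 //; lia.
  rewrite (measureU P (mSk _) (mSk _) (disj _ _ _)); last by lia.
  transitivity ((3 / 5 * a t)%:E * P S
                + ((2 / 5 * a t)%:E * P S + (1 - a t)%:E * P S))%E.
    by congr (_ + (_ + _))%E;
      [exact: measure_step_up|exact: measure_step_down4
      |exact: measure_step_down2].
  by rewrite -(fineK fS) -!EFinM -!EFinD; congr EFin; field.
have PSD : P (S `\` U) = (P S - P (S `&` U))%E.
  apply: measureD; [exact: hX|by do 2?apply: measurableU; apply: hX|].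
  exact: le_lt_trans (probability_le1 P (hX t j)) (ltry 1).
by rewrite -[LHS]/(P (S `\` U)) PSD PSU subee.
Qed.

Lemma negligible_off_step t :
  P.-negligible [set w | (6 <= X t w)%N /\ ~ chain_step (X t w) (X t.+1 w)].
Proof.
pose B j := [set w | X t w = j /\ ~ chain_step j (X t.+1 w)].
apply: (@negligibleS _ _ _ _ (\bigcup_(j in [set j | (6 <= j)%N]) B j)).
  by move=> w [w6 nstep]; exists (X t w).
rewrite bigcup_mkcond; apply: negligible_bigcup => j.
case: ifPn => [/set_mem j6|_]; last exact: negligible_set0.
apply/negligibleP; last exact: measure_state_off_step.
by apply: measurableD; [exact: hX|exact: measurable_preimage_nat (hX t.+1) _].
Qed.

Lemma negligible_low_overshoot t :
  P.-negligible [set w | (X t w <= 5)%N /\ (6 < X t.+1 w)%N].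
Proof.
apply/negligibleP; last exact: hlow.
have -> : [set w | (X t w <= 5)%N /\ (6 < X t.+1 w)%N] =
    X t @^-1` [set j | (j <= 5)%N] `&` X t.+1 @^-1` [set k | (6 < k)%N] by [].
by apply: measurableI; [exact: measurable_preimage_nat (hX t) _
  |exact: measurable_preimage_nat (hX t.+1) _].
Qed.

Lemma measure_state_succ_le t i : (7 <= i)%N ->
  (P [set w | X t.+1 w = i] <=
    (3 / 5 * a t)%:E * P [set w | X t w = (i - 1)%N]
    + (2 / 5 * a t)%:E * P [set w | X t w = (i + 4)%N]
    + (1 - a t)%:E * P [set w | X t w = (i + 2)%N])%E.
Proof.
move=> i7.
pose ev s k := [set w | X s w = k].
have mev k l : measurable (ev t k `&` ev t.+1 l).
  by apply: measurableI; apply: hX.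
pose A1 := ev t (i - 1)%N `&` ev t.+1 (i - 1 + 1)%N.
pose A2 := ev t (i + 4)%N `&` ev t.+1 (i + 4 - 4)%N.
pose A3 := ev t (i + 2)%N `&` ev t.+1 (i + 2 - 2)%N.
have mA : measurable (A1 `|` A2 `|` A3).
  by apply: measurableU; [apply: measurableU|]; apply: mev.
have [N [mN N0 sN]] :=
  negligibleU (negligible_low_overshoot t) (negligible_off_step t).
have le_cover : (P (ev t.+1 i) <= P (A1 `|` A2 `|` A3 `|` N))%E.
  apply: le_measure; rewrite ?inE; [exact: hX|exact: measurableU|].
  move=> w; rewrite /ev /= => Xi.
  have [w5|w6] := leqP (X t w) 5.
    by right; apply: sN; left; split => /=; lia.
  have [step|nstep] := pselect (chain_step (X t w) (X t.+1 w)); last first.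
    by right; apply: sN; right.
  left; case: step => [up|[down4|down2]]; [left; left|left; right|right];
    split; rewrite /ev /=; lia.
have PN : P (A1 `|` A2 `|` A3 `|` N) = P (A1 `|` A2 `|` A3).
  exact: measureU0 mA mN N0.
have le_sum : (P (A1 `|` A2 `|` A3) <= P A1 + P A2 + P A3)%E.
  apply: le_trans
    (measureU2 _ (measurableU _ _ (mev _ _) (mev _ _)) (mev _ _)) _.
  by apply: leeD => //; exact: measureU2.
apply: le_trans le_cover _; rewrite PN; apply: le_trans le_sum _.
rewrite measure_step_up ?measure_step_down4 ?measure_step_down2 //; lia.
Qed.

Lemma measure_state_succ_geometric t :
  (forall j, (6 <= j)%N ->
     (P [set w | X t w = j] <= ((2 / 3) ^+ (j - 6))%:E)%E) ->
  forall i, (6 <= i)%N ->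
    (P [set w | X t.+1 w = i] <= ((2 / 3) ^+ (i - 6))%:E)%E.
Proof.
move=> IH i i6; have [i6'|i7] := leqP i 6.
  by rewrite (_ : i - 6 = 0)%N ?expr0; [exact: probability_le1 (hX _ _)|lia].
apply: le_trans (measure_state_succ_le t i7) _.
apply: le_trans (leeD (leeD (lee_wpmul2l _ (IH (i - 1)%N _))
  (lee_wpmul2l _ (IH (i + 4)%N _))) (lee_wpmul2l _ (IH (i + 2)%N _))) _;
  rewrite ?lee_fin ?mulr_ge0 ?a_ge0 ?subr_ge0 ?a_le1 //; try lia.
have -> : (i - 1 - 6 = i - 7)%N by lia.
have -> : (i + 4 - 6 = i - 7 + 5)%N by lia.
have -> : (i + 2 - 6 = i - 7 + 3)%N by lia.
have -> : (i - 6 = i - 7 + 1)%N by lia.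
exact: chain_drift_le.
Qed.

End chain.

Theorem lemma5 (d : measure_display) (T : measurableType d) (R : realType)
  (P : probability T R) (a : nat -> R) (X : nat -> T -> nat)
  (ha : forall t, 0 <= a t <= 1)
  (hX : forall t k, measurable [set w | X t w = k])
  (h0 : P [set w | X 0%N w <> 0%N] = 0%E)
  (hlow : forall t, P [set w | (X t w <= 5)%N /\ (6 < X t.+1 w)%N] = 0%E)
  (hup : forall t (h : nat -> nat), (6 <= h t)%N ->
     P (history X t h `&` [set w | X t.+1 w = (h t + 1)%N])
       = ((3 / 5 * a t)%:E * P (history X t h))%E)
  (hdown4 : forall t (h : nat -> nat), (6 <= h t)%N ->
     P (history X t h `&` [set w | X t.+1 w = (h t - 4)%N])
       = ((2 / 5 * a t)%:E * P (history X t h))%E)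
  (hdown2 : forall t (h : nat -> nat), (6 <= h t)%N ->
     P (history X t h `&` [set w | X t.+1 w = (h t - 2)%N])
       = ((1 - a t)%:E * P (history X t h))%E) :
  forall (i t : nat), (6 <= i)%N ->
    (P [set w | X t w = i] <= ((2 / 3) ^+ (i - 6))%:E)%E.
Proof.
move=> i t; elim: t i => [|t IH] i i6.
  apply: le_trans (_ : P [set w | X 0%N w <> 0%N] <= _)%E; last first.
    by rewrite h0 lee_fin exprn_ge0.
  apply: le_measure; rewrite ?inE; [exact: hX|exact: measurableC (hX 0%N 0%N)|].
  by move=> w /= ->; lia.
exact: (measure_state_succ_geometric ha hX hlow hup hdown4 hdown2 IH).
Qed.
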